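(* Let $k\ge1$, let $f:[-k,k]^2\to[n]^2$ be injective and $W\subset[-k,k]^2$. Let $w(f_{|W})$ be the total number of edges (constraints, counted with multiplicity) of the constraint graph $G(f_{|W})$, and let $u(f_{|W})$ be the number of these edges containing a vertex of $G(f_{|W})$ that appears in only one constraint (i.e. has degree $1$ in $G(f_{|W})$). Then $$\gamma(f_{|W})\ge u(f_{|W})+\tfrac12\big(w(f_{|W})-u(f_{|W})\big)=\tfrac12 w(f_{|W})+\tfrac12 u(f_{|W}).$$
   Context: Every vertex $x\in[n]^2$ has four incident edges $\uparrow(x),\downarrow(x),\rightarrow(x),\leftarrow(x)$, where $\rightarrow(i,j)=\leftarrow(i+1,j)$ is the edge between $(i,j)$ and $(i+1,j)$ and $\uparrow(i,j)=\downarrow(i,j+1)$ is the edge between $(i,j)$ and $(i,j+1)$; for boundary vertices the edges leading out of $[n]^2$ are included. The constraint graph $G(f_{|W})=(V,E)$ is the multigraph whose vertices are grid edges and whose edge multiset $E$ consists of the pair $(\rightarrow(f(u)),\leftarrow(f(u+(1,0))))$ for each $u$ with $u,u+(1,0)\in W$ and $f(u+(1,0))\neq f(u)+(1,0)$, and the pair $(\uparrow(f(u)),\downarrow(f(u+(0,1))))$ for each $u$ with $u,u+(0,1)\in W$ and $f(u+(0,1))\ne f(u)+(0,1)$; $V$ is the set of grid edges appearing in some pair of $E$. With $c(f_{|W})$ the number of connected components of $G(f_{|W})$, $\gamma(f_{|W})=|V|-c(f_{|W})$. *)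

From mathcomp Require Import all_boot all_order all_algebra.
Unset Printing Implicit Defensive.
Import Order.TTheory GRing.Theory Num.Theory.
Local Open Scope ring_scope.

Notation pt := (int * int)%type.

(* Grid edges: (true,(i,j)) is the horizontal edge between (i,j) and (i+1,j);
   (false,(i,j)) is the vertical edge between (i,j) and (i,j+1).
   Edges leading out of [n]^2 are representable as well. *)
Notation gedge := (bool * pt)%type.

Definition eright (x : pt) : gedge := (true, x).
Definition eleft  (x : pt) : gedge := (true, (x.1 - 1, x.2)).
Definition eup    (x : pt) : gedge := (false, x).
Definition edown  (x : pt) : gedge := (false, (x.1, x.2 - 1)).

Definition e1 : pt := (1, 0).
Definition e2 : pt := (0, 1).
Definition addp (x y : pt) : pt := (x.1 + y.1, x.2 + y.2).

Definition rng (k : nat) : seq int := [seq (i%:Z - k%:Z) | i <- iota 0 (k + k).+1].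
Definition box (k : nat) : seq pt := [seq (a, b) | a <- rng k, b <- rng k].

Definition in_grid (n : nat) (x : pt) : bool :=
  (1 <= x.1 <= n%:Z) && (1 <= x.2 <= n%:Z).

(* The edge multiset E of the constraint graph G(f_|W): one pair per
   u in W (with the relevant neighbour in W and the constraint violated). *)
Definition constraints (k : nat) (f : pt -> pt) (W : {pred pt}) : seq (gedge * gedge) :=
  [seq (eright (f u), eleft (f (addp u e1)))
     | u <- box k & (u \in W) && (addp u e1 \in W) && (f (addp u e1) != addp (f u) e1)]
  ++
  [seq (eup (f u), edown (f (addp u e2)))
     | u <- box k & (u \in W) && (addp u e2 \in W) && (f (addp u e2) != addp (f u) e2)].

Definition cvertices k f W : seq gedge :=
  undup (flatten [seq [:: p.1; p.2] | p <- constraints k f W]).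

Definition cvtype k f W : finType := seq_sub (cvertices k f W).

Definition cadj k f W : rel (cvtype k f W) :=
  fun x y => ((ssval x, ssval y) \in constraints k f W)
          || ((ssval y, ssval x) \in constraints k f W).

Definition ncomp k f W : nat := n_comp (cadj k f W) (@predT (cvtype k f W)).

Definition gamma k f W : nat := #|cvtype k f W| - ncomp k f W.

Definition wconstr k f W : nat := size (constraints k f W).

Definition cdeg k f W (v : gedge) : nat :=
  count (fun p : gedge * gedge => (p.1 == v) || (p.2 == v)) (constraints k f W).

Definition uconstr k f W : nat :=
  count (fun p : gedge * gedge => (cdeg k f W p.1 == 1%N) || (cdeg k f W p.2 == 1%N))
        (constraints k f W).

From mathcomp Require Import all_boot all_order all_algebra.
From mathcomp Require Import zify.
Set Implicit Arguments.
Unset Strict Implicit.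

(* By injectivity of f, every grid edge is the left end of at most one constraint
   and the right end of at most one, and no constraint is a loop; so G(f_|W) has
   maximum degree 2.  Discharging: give every vertex 4 tokens, let every
   constraint take one token from each end (2w in total) and every constraint
   with a degree-1 end take 2 more from its degree-1 end(s).  A vertex of degree
   2 keeps 2 tokens, every other vertex keeps at least 1, and the two ends of an
   isolated constraint keep 2 each, so every component keeps at least 4 tokens:
   4|V| >= 2w + 2u + 4c. *)

Lemma leq_sum_uniq (I : finType) (P : pred I) (F : I -> nat) (r : seq I) :
  uniq r -> all P r -> \sum_(i <- r) F i <= \sum_(i | P i) F i.
Proof.
move=> ur /allP rP; rewrite big_uniq // [X in X <= _]big_mkcond [X in _ <= X]big_mkcond.
by apply: leq_sum => i _; case: ifPn => // /rP ->.
Qed.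

Lemma count_sum (A : Type) (a : pred A) (r : seq A) : count a r = \sum_(x <- r) a x.
Proof. by rewrite -sum1_count big_mkcond; apply: eq_bigr => x _; case: (a x). Qed.

Section PairGraph.

Variables (T : choiceType) (s : seq (T * T)).

Definition pair_vertices : seq T := undup (flatten [seq [:: p.1; p.2] | p <- s]).

Definition pair_linked (x y : T) : bool := ((x, y) \in s) || ((y, x) \in s).

Definition pair_adj : rel (seq_sub pair_vertices) :=
  fun x y => pair_linked (ssval x) (ssval y).

Definition pair_deg (v : T) : nat := count (fun p : T * T => (p.1 == v) || (p.2 == v)) s.

Definition leaf_edges : nat :=
  count (fun p : T * T => (pair_deg p.1 == 1) || (pair_deg p.2 == 1)) s.

(* The two extra tokens of a constraint with a degree-1 end are taken from its
   degree-1 ends, one from each if both ends have degree 1. *)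
Definition leaf_share (v : T) (p : T * T) : nat :=
  (pair_deg v == 1) *
  ((p.1 == v) * (2 - (pair_deg p.2 == 1)) + (p.2 == v) * (2 - (pair_deg p.1 == 1))).

Definition leaf_charge (v : T) : nat := \sum_(p <- s) leaf_share v p.

Definition residual_charge (v : T) : nat := 4 - pair_deg v - leaf_charge v.

Hypothesis pair_loopless : {in s, forall p, p.1 != p.2}.
Hypothesis uniq_fst : uniq (unzip1 s).
Hypothesis uniq_snd : uniq (unzip2 s).

Lemma mem_pair_vertices x :
  (x \in pair_vertices) = has (fun p : T * T => (p.1 == x) || (p.2 == x)) s.
Proof.
rewrite mem_undup; apply/flatten_mapP/hasP => -[p ps].
  by rewrite !inE => h; exists p => //; rewrite ![_ == x]eq_sym.
by move=> h; exists p => //; rewrite !inE ![x == _]eq_sym.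
Qed.

Lemma pair_deg_gt0 x : (0 < pair_deg x) = (x \in pair_vertices).
Proof. by rewrite mem_pair_vertices has_count. Qed.

Lemma pair_deg_le2 v : pair_deg v <= 2.
Proof.
have count_le1 (u : seq T) : uniq u -> count_mem v u <= 1.
  by move=> /count_uniq_mem ->; apply: leq_b1.
have h1 := count_le1 _ uniq_fst; have h2 := count_le1 _ uniq_snd.
rewrite count_map in h1; rewrite count_map in h2.
apply: leq_trans (leq_add h1 h2).
by rewrite -count_predUI leq_addr.
Qed.

Lemma pair_linked_sym x y : pair_linked x y = pair_linked y x.
Proof. by rewrite /pair_linked orbC. Qed.

Lemma pair_linked_neq x y : pair_linked x y -> x != y.
Proof. by case/orP => /pair_loopless //=; rewrite eq_sym. Qed.

Lemma pair_linked_vertex x y : pair_linked x y -> y \in pair_vertices.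
Proof.
rewrite mem_pair_vertices => /orP[] ps; apply/hasP;
  by [exists (x, y); rewrite //= eqxx orbT | exists (y, x); rewrite //= eqxx].
Qed.

Lemma pair_vertex_linked x : x \in pair_vertices -> exists y, pair_linked x y.
Proof.
rewrite mem_pair_vertices => /hasP[[a b] ps /= /orP[] /eqP <-].
  by exists b; rewrite /pair_linked ps.
by exists a; rewrite /pair_linked ps orbT.
Qed.

Lemma leaf_share_le v p :
  p \in s -> leaf_share v p <= (pair_deg v == 1) * (2 * ((p.1 == v) || (p.2 == v))).
Proof.
move=> /pair_loopless; rewrite /leaf_share; case: (pair_deg v == 1) => //.
by case: (p.1 =P v) => [->|_]; case: (p.2 =P v) => [->|_]; rewrite ?eqxx //=; lia.
Qed.

Lemma leaf_charge_le2 v : leaf_charge v <= 2.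
Proof.
rewrite /leaf_charge; apply: leq_trans (_ : (pair_deg v == 1) * (2 * pair_deg v) <= 2).
  rewrite /pair_deg [X in 2 * X]count_sum !big_distrr /= big_seq [X in _ <= X]big_seq.
  by apply: leq_sum => p ps; apply: leaf_share_le.
by case: eqP => [->|].
Qed.

Lemma leaf_charge_deg1 v p :
  pair_deg v = 1 -> p \in s -> (p.1 == v) || (p.2 == v) -> leaf_charge v = leaf_share v p.
Proof.
move=> dv ps pv; rewrite /leaf_charge (bigID (fun q : T * T => (q.1 == v) || (q.2 == v))) /=.
rewrite [X in _ + X]big1 ?addn0; last first.
  move=> q; rewrite negb_or => /andP[/negbTE q1 /negbTE q2].
  by rewrite /leaf_share q1 q2 !mul0n muln0.
rewrite -big_filter; set l := [seq q <- s | _].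
have : p \in l by rewrite mem_filter pv.
have : size l = 1 by rewrite size_filter.
by case: l => [|q [|]] //= _; rewrite inE => /eqP ->; rewrite big_seq1.
Qed.

Lemma leaf_charge_deg2 v : pair_deg v = 2 -> leaf_charge v = 0.
Proof. by move=> dv; apply: big1 => p _; rewrite /leaf_share dv. Qed.

Lemma residual_charge_split v : pair_deg v + leaf_charge v + residual_charge v = 4.
Proof. by rewrite /residual_charge; have := pair_deg_le2 v; have := leaf_charge_le2 v; lia. Qed.

Lemma residual_charge_deg2 v : pair_deg v = 2 -> residual_charge v = 2.
Proof. by move=> dv; rewrite /residual_charge leaf_charge_deg2 // dv. Qed.

Lemma residual_charge_gt0 v : v \in pair_vertices -> 0 < residual_charge v.
Proof.
rewrite -pair_deg_gt0 => dv; have := pair_deg_le2 v.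
have [d2|] := eqVneq (pair_deg v) 2; first by rewrite residual_charge_deg2.
by rewrite /residual_charge; have := leaf_charge_le2 v; lia.
Qed.

Lemma residual_charge_leaf_pair x y :
  pair_linked x y -> pair_deg x = 1 -> pair_deg y = 1 -> 2 <= residual_charge x.
Proof.
move=> xy dx dy; have /negbTE yx : y != x by rewrite eq_sym pair_linked_neq.
case/orP: xy => ps; rewrite /residual_charge (leaf_charge_deg1 dx ps) /= ?eqxx ?orbT //;
  by rewrite /leaf_share /= eqxx yx dx dy.
Qed.

Lemma pair_linked_other x y :
  pair_linked x y -> pair_deg x = 2 -> pair_deg y = 1 -> exists2 z, pair_linked x z & z != y.
Proof.
move=> xy dx dy; pose at_ (v : T) (q : T * T) := (q.1 == v) || (q.2 == v).
have [all_y|] := boolP (all (fun q => at_ x q ==> at_ y q) s).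
  suff : pair_deg x <= pair_deg y by rewrite dx dy.
  rewrite /pair_deg -(@eq_in_count _ (fun q => at_ x q && at_ y q)); last first.
    move=> q /(allP all_y); rewrite /at_ /=; case: (_ || _) => //=; by rewrite andbT.
  by apply: sub_count => q /andP[].
case/allPn => -[a b] ps; rewrite negb_imply /at_ /= negb_or => /andP[/orP[] /eqP <- /andP[ay yb]].
  by exists b => //; apply/orP; left.
by exists a => //; apply/orP; right.
Qed.

Lemma pair_linked_edge p : p \in s -> pair_linked p.1 p.2.
Proof. by case: p => a b ps; rewrite /pair_linked ps. Qed.

Lemma leq_sum_endpoints (F : T -> nat) p :
  p \in s -> F p.1 + F p.2 <= \sum_(v : seq_sub pair_vertices) F (ssval v).
Proof.
move=> ps; have e12 := pair_linked_edge ps.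
have h1 : p.1 \in pair_vertices by apply: (@pair_linked_vertex p.2); rewrite pair_linked_sym.
have h2 := pair_linked_vertex e12.
have := @leq_sum_uniq _ predT (fun v => F (ssval v)) [:: SeqSub h1; SeqSub h2].
rewrite big_cons big_seq1; apply => //=; rewrite inE andbT -val_eqE /=.
exact: pair_linked_neq.
Qed.

Lemma twice_size_le_sum_deg : 2 * size s <= \sum_(v : seq_sub pair_vertices) pair_deg (ssval v).
Proof.
rewrite /pair_deg; under eq_bigr do rewrite count_sum.
rewrite exchange_big /= mulnC -sum1_size big_distrl /= big_seq [X in _ <= X]big_seq.
apply: leq_sum => p ps /=; have := leq_sum_endpoints (fun v => (p.1 == v) || (p.2 == v)) ps.
by rewrite /= !eqxx orbT.
Qed.

Lemma twice_leaf_le_sum_leaf_charge :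
  2 * leaf_edges <= \sum_(v : seq_sub pair_vertices) leaf_charge (ssval v).
Proof.
rewrite /leaf_charge exchange_big /= /leaf_edges count_sum big_distrr /=.
rewrite big_seq [X in _ <= X]big_seq; apply: leq_sum => -[a b] ps.
apply: leq_trans (leq_sum_endpoints (leaf_share^~ (a, b)) ps).
have /negbTE ba : b != a by rewrite eq_sym (pair_loopless ps).
rewrite /leaf_share /= !eqxx ba (eq_sym a) ba.
by case: (pair_deg a == 1); case: (pair_deg b == 1).
Qed.

Lemma pair_adj_sym : connect_sym pair_adj.
Proof. by apply: sym_connect_sym => x y; rewrite /pair_adj pair_linked_sym. Qed.

Lemma adjacent_charge (X Y : seq_sub pair_vertices) : pair_adj X Y ->
  exists2 l, uniq l && all (connect pair_adj X) l & 4 <= \sum_(v <- l) residual_charge (ssval v).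
Proof.
wlog dXY : X Y / (pair_deg (ssval Y) == 1) ==> (pair_deg (ssval X) == 1).
  move=> gen XY; have [c|dYX] := boolP ((pair_deg (ssval Y) == 1) ==> (pair_deg (ssval X) == 1)).
    exact: gen c XY.
  have YX : pair_adj Y X by rewrite /pair_adj pair_linked_sym.
  have cYX : (pair_deg (ssval X) == 1) ==> (pair_deg (ssval Y) == 1).
    by move: dYX; rewrite negb_imply => /andP[_ /negbTE ->].
  have [l /andP[ul cl] sl] := gen Y X cYX YX; exists l => //; rewrite ul /=.
  by apply/allP => v /(allP cl); apply: connect_trans (connect1 XY).
move: dXY; case: X Y => [x hx] [y hy] /= dxy xy.
have {}xy : pair_linked x y := xy.
have yx : pair_linked y x by rewrite pair_linked_sym.
have deg12 v : v \in pair_vertices -> pair_deg v = 1 \/ pair_deg v = 2.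
  by rewrite -pair_deg_gt0; have := pair_deg_le2 v; lia.
set X := SeqSub hx; set Y := SeqSub hy.
have cXY : connect pair_adj X Y by apply: connect1.
case: (deg12 y hy) => dy.
  have dx : pair_deg x = 1 by apply/eqP; rewrite dy eqxx in dxy.
  exists [:: X; Y]; first by rewrite /= inE -val_eqE /= pair_linked_neq // connect0 cXY.
  have := residual_charge_leaf_pair xy dx dy; have := residual_charge_leaf_pair yx dy dx.
  by rewrite big_cons big_seq1 /=; lia.
case: (deg12 x hx) => dx; last first.
  exists [:: X; Y]; first by rewrite /= inE -val_eqE /= pair_linked_neq // connect0 cXY.
  by rewrite big_cons big_seq1 /= !residual_charge_deg2.
have [z yz zx] := pair_linked_other yx dy dx; set Z := SeqSub (pair_linked_vertex yz).
have cXZ : connect pair_adj X Z by apply: connect_trans cXY (connect1 _).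
exists [:: X; Y; Z].
  by rewrite /= !inE -!val_eqE /= negb_or (pair_linked_neq xy) (eq_sym x z) zx
    (pair_linked_neq yz) connect0 cXY cXZ.
have := residual_charge_gt0 hx; have := residual_charge_gt0 (pair_linked_vertex yz).
by rewrite !big_cons big_nil /= (residual_charge_deg2 dy); lia.
Qed.

Lemma component_charge (r : seq_sub pair_vertices) : r \in roots pair_adj ->
  4 <= \sum_(v | fingraph.root pair_adj v == r) residual_charge (ssval v).
Proof.
move=> /eqP rr; have [y ry] := pair_vertex_linked (ssvalP r).
have [l /andP[ul cl]] := adjacent_charge (ry : pair_adj r (SeqSub (pair_linked_vertex ry))).
move/leq_trans; apply; apply: leq_sum_uniq => //; apply/allP => v /(allP cl) rv.
by rewrite -rr (root_connect pair_adj_sym) pair_adj_sym.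
Qed.

Lemma pair_graph_bound :
  2 * size s + 2 * leaf_edges + 4 * n_comp pair_adj predT <= 4 * #|{: seq_sub pair_vertices}|.
Proof.
have -> : 4 * #|{: seq_sub pair_vertices}| =
    \sum_(v : seq_sub pair_vertices) (pair_deg (ssval v) + leaf_charge (ssval v)
                                     + residual_charge (ssval v)).
  by under eq_bigr do rewrite residual_charge_split; rewrite sum_nat_const mulnC.
have comps : 4 * n_comp pair_adj predT <= \sum_(v : seq_sub pair_vertices) residual_charge (ssval v).
  rewrite (partition_big (fingraph.root pair_adj) (roots pair_adj)) /=; last first.
    by move=> v _; apply: (roots_root pair_adj_sym).
  rewrite mulnC -sum_nat_const (eq_bigl (roots pair_adj)) => [|v]; last by rewrite !inE andbT.
  by apply: leq_sum => r; apply: component_charge.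
rewrite !big_split /= leq_add // leq_add //.
  exact: twice_size_le_sum_deg.
exact: twice_leaf_le_sum_leaf_charge.
Qed.

End PairGraph.

Lemma rng_uniq k : uniq (rng k).
Proof. by rewrite map_inj_uniq ?iota_uniq // => a b /= eab; apply/eqP; lia. Qed.

Lemma box_uniq k : uniq (box k).
Proof. by apply: allpairs_uniq; rewrite ?rng_uniq // => -[a b] [c d] _ _ /= [-> ->]. Qed.

Lemma addp_inj y : injective (addp ^~ y).
Proof. by move=> [a b] [c d] /= [ac bd]; congr pair; lia. Qed.

Lemma eright_eq_eleft x y : (eright x == eleft y) = (y == addp x e1).
Proof.
case: x y => [a b] [c d]; rewrite /eright /eleft /addp /e1 !xpair_eqE /=.
by apply/andP/andP => -[/eqP ac /eqP bd]; split; apply/eqP; lia.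
Qed.

Lemma eup_eq_edown x y : (eup x == edown y) = (y == addp x e2).
Proof.
case: x y => [a b] [c d]; rewrite /eup /edown /addp /e2 !xpair_eqE /=.
by apply/andP/andP => -[/eqP ac /eqP bd]; split; apply/eqP; lia.
Qed.

Lemma eleft_inj : injective eleft.
Proof. by move=> [a b] [c d] /= [ac bd]; congr pair; lia. Qed.

Lemma edown_inj : injective edown.
Proof. by move=> [a b] [c d] /= [ac bd]; congr pair; lia. Qed.

Lemma constraints_loopless k f W : {in constraints k f W, forall p, p.1 != p.2}.
Proof.
move=> p; rewrite mem_cat => /orP[] /mapP[u]; rewrite mem_filter => /andP[/andP[_ ne] _] -> /=.
  by rewrite eright_eq_eleft.
by rewrite eup_eq_edown.
Qed.

Section InjectiveConstraints.

Variables (k : nat) (f : pt -> pt) (W : {pred pt}).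
Hypothesis f_inj : {in box k &, injective f}.
Hypothesis W_box : {subset W <= box k}.

Lemma uniq_constraints_fst : uniq (unzip1 (constraints k f W)).
Proof.
rewrite /unzip1 map_cat -!map_comp cat_uniq; apply/and3P; split.
- rewrite map_inj_in_uniq ?filter_uniq ?box_uniq // => u v.
  by rewrite !mem_filter => /andP[_ ub] /andP[_ vb] [/f_inj]; apply.
- by apply/hasPn => _ /mapP[u _ ->]; apply/mapP => -[v].
- rewrite map_inj_in_uniq ?filter_uniq ?box_uniq // => u v.
  by rewrite !mem_filter => /andP[_ ub] /andP[_ vb] [/f_inj]; apply.
Qed.

Lemma uniq_constraints_snd : uniq (unzip2 (constraints k f W)).
Proof.
rewrite /unzip2 map_cat -!map_comp cat_uniq; apply/and3P; split.
- rewrite map_inj_in_uniq ?filter_uniq ?box_uniq // => u v.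
  rewrite !mem_filter => /andP[/andP[/andP[_ /W_box u1] _] _] /andP[/andP[/andP[_ /W_box v1] _] _].
  by move=> /eleft_inj/(f_inj u1 v1)/addp_inj.
- by apply/hasPn => _ /mapP[u _ ->]; apply/mapP => -[v].
- rewrite map_inj_in_uniq ?filter_uniq ?box_uniq // => u v.
  rewrite !mem_filter => /andP[/andP[/andP[_ /W_box u1] _] _] /andP[/andP[/andP[_ /W_box v1] _] _].
  by move=> /edown_inj/(f_inj u1 v1)/addp_inj.
Qed.

End InjectiveConstraints.

Theorem proposition3p5 (k n : nat) (f : pt -> pt) (W : {pred pt}) :
  (1 <= k)%N ->
  {in box k &, injective f} ->
  {in box k, forall x, in_grid n (f x)} ->
  {subset W <= box k} ->
  (wconstr k f W + uconstr k f W <= 2 * gamma k f W)%N.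
Proof.
move=> _ f_inj _ W_box.
have : 2 * wconstr k f W + 2 * uconstr k f W + 4 * ncomp k f W <= 4 * #|cvtype k f W|.
  exact: (pair_graph_bound (@constraints_loopless k f W)
           (uniq_constraints_fst W f_inj) (uniq_constraints_snd f_inj W_box)).
by rewrite /gamma; lia.
Qed.
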